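(* Let $X$ be a connected Hausdorff topological space and let $\mathbf{F}$ be an infinite-dimensional $1$-independent Banach space of continuous functions over $X$ such that every bounded linear operator on $\mathbf{F}$ is of the form $\lambda\,\mathrm{Id}+K$ with $\lambda\in\mathbb{C}$ and $K$ compact. Then every multiplier of $\mathbf{F}$ is a constant function.
   Context: A Banach space of continuous functions over $X$ is a linear subspace of the space $C(X)$ of continuous complex functions with a complete norm whose topology is stronger than the compact-open topology. It is $1$-independent if for each $x\in X$ some $f\in\mathbf{F}$ has $f(x)\ne0$. $\omega:X\to\mathbb{C}$ is a multiplier of $\mathbf{F}$ if $\omega f\in\mathbf{F}$ for all $f\in\mathbf{F}$ and $f\mapsto\omega f$ is bounded on $\mathbf{F}$. *)

From HB Require Import structures.
From mathcomp Require Import all_boot all_order all_algebra.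
From mathcomp Require Import all_classical all_reals all_analysis.
From mathcomp Require Export complex.

Set Implicit Arguments.
Unset Strict Implicit.
Unset Printing Implicit Defensive.

Import Order.TTheory GRing.Theory Num.Theory.
Local Open Scope classical_set_scope.
Local Open Scope ring_scope.

(* The complex numbers R[i] (R : realType) with their usual (modulus) norm,
   topology and structure of normed module over themselves. *)
HB.instance Definition _ (R : rcfType) := GRing.ComAlgebra.copy R[i] (R[i])^o.
HB.instance Definition _ (R : rcfType) := NormedModule.copy R[i] (R[i])^o.

(* A Banach space of continuous functions over X: the complex Banach space V
   (complete normed R[i]-module) is identified, through the injective linear
   map iota, with a linear subspace of C(X); the norm topology of V is
   stronger than the compact-open topology, i.e. iota is continuous from V
   into the space X -> R[i] equipped with the compact-open topology. *)
Definition banach_cfun (R : realType) (X : topologicalType)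
    (V : completeNormedModType R[i]) (iota : V -> X -> R[i]) : Prop :=
  [/\ injective iota,
      (forall (a : R[i]) (u v : V) (x : X),
          iota (a *: u + v) x = a * iota u x + iota v x),
      (forall v : V, continuous (iota v)) &
      continuous (iota : V -> {compact-open, X -> R[i]})].

Definition one_independent (R : realType) (X : topologicalType)
    (V : completeNormedModType R[i]) (iota : V -> X -> R[i]) : Prop :=
  forall x : X, exists v : V, iota v x != 0.

Definition finite_dimensional (R : realType) (V : completeNormedModType R[i])
  : Prop :=
  exists s : seq V, forall v : V,
    exists c : 'I_(size s) -> R[i], v = \sum_(i < size s) c i *: s`_i.

Definition bounded_op (R : realType) (V : completeNormedModType R[i])
    (T : V -> V) : Prop :=
  exists M : R[i], forall v : V, `|T v| <= M * `|v|.

Definition compact_op (R : realType) (V : completeNormedModType R[i])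
    (K : V -> V) : Prop :=
  precompact (K @` [set v : V | `|v| <= 1]).

Definition multiplier (R : realType) (X : topologicalType)
    (V : completeNormedModType R[i]) (iota : V -> X -> R[i])
    (omega : X -> R[i]) : Prop :=
  (forall v : V, exists w : V, iota w = (fun x => omega x * iota v x)) /\
  (exists M : R[i], forall v w : V,
      iota w = (fun x => omega x * iota v x) -> `|w| <= M * `|v|).

From HB Require Import structures.
From mathcomp Require Import all_boot all_order all_algebra.
From mathcomp Require Import all_classical all_reals all_analysis.
From mathcomp Require Import complex lra.
(* Multiplication by omega is a bounded operator, hence equals lambda + K
   with K compact, and K is multiplication by g := omega - lambda, which is
   continuous since locally g = K v / v for a v not vanishing there.  If g
   were not constant, connectedness of X would give points x_0, x_1, ... where
   g takes pairwise distinct values bounded away from 0.  On the subspace of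
   functions vanishing at x_0, ..., x_(n-1) the evaluation at x_n is then a
   nonzero bounded functional; pick v_n of norm at most 1 almost norming it.
   For n < m, K v_n - K v_m lies in that subspace and takes at x_n the value
   g(x_n) v_n(x_n), so the K v_n are uniformly separated, contradicting the
   compactness of K. *)

Set Implicit Arguments.
Unset Strict Implicit.
Unset Printing Implicit Defensive.

Import Order.TTheory GRing.Theory Num.Theory.
Local Open Scope classical_set_scope.
Local Open Scope ring_scope.
Local Open Scope complex_scope.

Lemma Re_continuous (R : realType) :
  continuous (fun z : R[i] => complex.Re z : R^o).
Proof.
move=> z; apply/(@cvgrPdist_lt _ _ _ (nbhs z)) => e e0.
have ReB w : `|complex.Re z - complex.Re w|%:C <= `|z - w|.
  by have := normc_ge_Re (z - w); case: z w => [? ?] [? ?].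
near=> w; rewrite -ltcR (le_lt_trans (ReB w)) //.
by near: w; apply: cvgr_dist_lt => //; rewrite ltcR.
Unshelve. all: by end_near.
Qed.

Lemma locally_quotient_continuous (R : realType) (X : topologicalType)
    (f : X -> R[i]) :
  (forall x, exists u v : X -> R[i],
     [/\ continuous u, continuous v, v x != 0 & forall y, f y * v y = u y]) ->
  continuous f.
Proof.
move=> fq x; have [u [v [uc vc vx0 fuv]]] := fq x.
rewrite /continuous_at (_ : f x = u x / v x); last by rewrite -fuv mulfK.
apply: cvg_trans (cvgM (uc x) (cvgV vx0 (vc x))); apply: near_eq_cvg.
have : \forall y \near x, v y != 0 by exact: cvgr_neq0 (vc x) vx0.
by apply: filterS => y vy0 /=; rewrite -fuv mulfK.
Qed.

Lemma compact_open_eval_continuous (T X Y : topologicalType)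
    (F : T -> X -> Y) :
  continuous (F : T -> {compact-open, X -> Y}) ->
  forall x, continuous (fun t => F t x).
Proof.
move=> Fc x t B; rewrite nbhsE; case=> O [oO Ox] OB.
pose Fx_in_O := [set f : {compact-open, X -> Y} | f @` [set x] `<=` O].
have : (F @ t) Fx_in_O.
  (* not found by instance resolution through the compact-open coercion *)
  have Ft_filter : Filter (F @ t) := fmap_filter _ (nbhs_filter t).
  apply: (@compact_open_cvgP X Y (F @ t) (F t) Ft_filter).1.
  - exact: Fc.
  - exact: compact_set1.
  - exact: oO.
  - by move=> _ [y -> <-].
apply: (@filterS T (nbhs t) _ (F @^-1` Fx_in_O)).
by move=> s sO; apply/OB/sO; exists x.
Qed.

Lemma segment_injective_seq (R : realFieldType) (p q : R) : p < q ->
  exists t : nat -> R, injective t /\ forall n, p <= t n <= q.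
Proof.
move=> pq; have qp0 : 0 < q - p by rewrite subr_gt0.
exists (fun n => p + (q - p) / n.+1%:R); split.
  move=> m n /addrI/(mulfI (lt0r_neq0 qp0))/invr_inj/eqP.
  by rewrite eqr_nat eqSS => /eqP.
move=> n; apply/andP; split; first by rewrite lerDl divr_ge0 ?ltW.
by rewrite -lerBrDl ler_pdivrMr // ler_pMr // ler1n.
Qed.

Lemma interval_injective_seq_away0 (R : realType) (S : set R) (a b : R) :
  is_interval S -> S a -> S b -> a != b ->
  exists (t : nat -> R) (eps : R),
    [/\ 0 < eps, injective t, forall n, S (t n) & forall n, eps <= `|t n|].
Proof.
move=> iS Sa Sb; rewrite neq_lt.
wlog ab : a b Sa Sb / a < b.
  move=> wlg /orP[ab|ba]; first by apply: (wlg a b); rewrite ?ab.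
  by apply: (wlg b a); rewrite ?ba ?orbT.
move=> _.
suff [p [q [eps [pq eps0 ap qb peps]]]] : exists p q eps, [/\ p < q, 0 < eps,
    a <= p, q <= b & forall x, p <= x <= q -> eps <= `|x|].
  have [t [tinj tpq]] := segment_injective_seq pq.
  exists t, eps; split => // n; have /andP[pt tq] := tpq n; last exact: peps.
  by apply: (iS a b) => //; rewrite (le_trans ap pt) (le_trans tq qb).
have [b0|b0] := ltP 0 b.
  exists (Num.max a (b / 2)), b, (b / 2); split.
  - by rewrite gt_max ab /=; lra.
  - by rewrite divr_gt0.
  - by rewrite le_max lexx.
  - by [].
  - move=> x /andP[]; rewrite ge_max; case/andP=> _ bx _.
    by rewrite (le_trans bx) ?ler_norm.
exists a, (Num.min b (a / 2)), (- (a / 2)); split.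
- by rewrite lt_min ab /=; lra.
- by lra.
- by [].
- by rewrite ge_min lexx.
- move=> x /andP[_]; rewrite le_min; case/andP=> _ xa.
  by rewrite -normrN ler_normr lerN2 xa.
Qed.

Lemma exists_unit_Re_neq (R : rcfType) (z w : R[i]) : z != w ->
  exists c : R[i], `|c| = 1 /\ complex.Re (z * c) != complex.Re (w * c).
Proof.
case: (eqVneq (complex.Re z) (complex.Re w)) => [Rezw zw|Rezw _]; last first.
  by exists 1; rewrite normr1 !mulr1.
exists 'i%C; split; first by rewrite complexiE normCi.
rewrite !ReiNIm eqr_opp; apply: contra zw => /eqP Imzw.
by move: Rezw Imzw; case: z w => [? ?] [? ?] /= -> ->.
Qed.

Lemma precompact_no_separated_seq (K : numFieldType) (V : normedModType K)
    (A : set V) (u : nat -> V) (eps : K) :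
  precompact A -> 0 < eps -> (forall n, A (u n)) ->
  ~ (forall n m, (n < m)%N -> eps <= `|u n - u m|).
Proof.
rewrite precompactE => cA eps0 Au sep.
have uA : (u @ \oo) (closure A).
  by apply: (@filterE _ \oo) => n; apply: subset_closure.
have [p [_ clp]] := cA _ _ uA.
have eps20 : 0 < eps / 2 by rewrite divr_gt0.
have Bp : nbhs p [set y | `|p - y| < eps / 2].
  by apply/nbhs_normP; exists (eps / 2).
have urange : (u @ \oo) (range u) by apply: (@filterE _ \oo) => n; exists n.
have [_ [[n _ <-] pn]] := clp _ _ urange Bp.
have Fn : (u @ \oo) [set u m | m in [set m | (n < m)%N]].
  by apply: filterS (nbhs_infty_gt n) => m nm; exists m.
have [_ [[m nm <-] pm]] := clp _ _ Fn Bp.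
suff : `|u n - u m| < eps by move/(le_lt_trans (sep n m nm)); rewrite ltxx.
rewrite (splitr eps) -(subrKA p) addrC.
by apply: le_lt_trans (ler_normD _ _) (ltrD pm _); rewrite -normrN opprB.
Qed.

Lemma almost_norming_vector (R : realType) (V : normedModType R[i])
    (P : V -> Prop) (phi : V -> R[i]) (C : R[i]) :
  (forall a u, P u -> P (a *: u)) ->
  (forall a u, phi (a *: u) = a * phi u) ->
  (forall u, `|u| <= 1 -> `|phi u| <= C) ->
  (exists2 u0, P u0 & phi u0 != 0) ->
  exists v s, [/\ P v, `|v| <= 1, 0 < s, s < 2 * `|phi v| &
                forall u, P u -> `|phi u| <= s * `|u|].
Proof.
move=> PZ phiZ phiB [u0 Pu0 phiu0].
have Re_norm (z : R[i]) : (complex.Re `|z|)%:C = `|z|.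
  by apply: RRe_real; rewrite normr_real.
have phi0 : phi 0 = 0 by rewrite -(scale0r 0) phiZ mul0r.
have unitu (u : V) : u != 0 -> `|(`|u|^-1 *: u)| = 1.
  by move=> un0; rewrite normrZ normfV normr_id mulVf ?normr_eq0.
pose S := [set complex.Re `|phi u| | u in [set u | P u /\ `|u| <= 1]].
have u0n0 : u0 != 0 by apply: contra_neq phiu0 => u00; rewrite u00.
have S_u0 : S (complex.Re `|phi (`|u0|^-1 *: u0)|).
  by exists (`|u0|^-1 *: u0) => //; split; [exact: PZ | rewrite unitu].
have supS : has_sup S.
  split; first by exists (complex.Re `|phi (`|u0|^-1 *: u0)|).
  exists (complex.Re C) => _ [u [_ u1] <-].
  by move: (phiB u u1); rewrite lecE => /andP[_].
have supS_gt0 : 0 < sup S.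
  apply: lt_le_trans (sup_upper_bound supS S_u0); rewrite -ltcR Re_norm.
  by rewrite normr_gt0 phiZ mulf_neq0 // invr_eq0 normr_eq0.
have [_ [v [Pv v1] <-] vsup] :=
  sup_adherent (divr_gt0 supS_gt0 (ltr0n _ 2)) supS.
exists v, (sup S)%:C; split => //; first by rewrite ltcR.
  have c2 : 2 = 2%:C :> R[i] by rewrite -(rmorph_nat (real_complex R)).
  rewrite -Re_norm c2 -rmorphM ltcR mulrC -ltr_pdivrMr //.
  by move: vsup; rewrite {1}(splitr (sup S)) addrK.
move=> u Pu; have [->|un0] := eqVneq u 0; first by rewrite phi0 !normr0 mulr0.
have : `|phi (`|u|^-1 *: u)| <= (sup S)%:C.
  rewrite -Re_norm lecR; apply: sup_upper_bound => //.
  by exists (`|u|^-1 *: u) => //; split; [exact: PZ | rewrite unitu].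
rewrite phiZ normrM normfV normr_id mulrC -ler_pdivlMr ?invr_gt0 ?normr_gt0 //.
by rewrite invrK.
Qed.

Section MultiplicationOperator.
Variables (R : realType) (X : topologicalType) (V : completeNormedModType R[i]).
Variable iota : V -> X -> R[i].
Hypothesis iota_lin : forall (a : R[i]) (u v : V) (x : X),
  iota (a *: u + v) x = a * iota u x + iota v x.

Definition cfun_eval (x : X) : {linear V -> R[i]} :=
  HB.pack (fun v => iota v x)
    (GRing.isLinear.Build _ _ _ _ _ (fun a u v => iota_lin a u v x)).

Lemma iotaZ (a : R[i]) (u : V) (x : X) : iota (a *: u) x = a * iota u x.
Proof. exact: (linearZ_LR (cfun_eval x) a u). Qed.

Lemma iotaB (u v : V) (x : X) : iota (u - v) x = iota u x - iota v x.
Proof. exact: (raddfB (cfun_eval x) u v). Qed.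

Lemma multiplier_operator (omega : X -> R[i]) : injective iota ->
  multiplier iota omega -> exists T : {linear V -> V},
    bounded_op T /\ forall v x, iota (T v) x = omega x * iota v x.
Proof.
move=> iota_inj [/choice[T HT] [M HM]].
have T_lin : linear T.
  move=> a u v; apply: iota_inj; apply/funext => x.
  by rewrite iota_lin !HT iota_lin mulrDr mulrCA.
pose TL : {linear V -> V} := HB.pack T (GRing.isLinear.Build _ _ _ _ T T_lin).
exists TL; split.
  by exists M => v; apply: HM.
by move=> v x; rewrite HT.
Qed.

Variables (K : V -> V) (g : X -> R[i]).
Hypothesis Kg : forall v x, iota (K v) x = g x * iota v x.
Hypothesis iota_cont : forall v, continuous (iota v).
Hypothesis one_indep : one_independent iota.

Lemma multiplication_symbol_continuous : continuous g.
Proof.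
apply: locally_quotient_continuous => x; have [v vx] := one_indep x.
by exists (iota (K v)), (iota v); split => // y; rewrite Kg.
Qed.

Definition vanish_before (xs : nat -> X) (n : nat) (u : V) :=
  forall j, (j < n)%N -> iota u (xs j) = 0.

Lemma exists_vanish_before (xs : nat -> X) : injective (g \o xs) ->
  forall n, exists2 u, vanish_before xs n u & iota u (xs n) != 0.
Proof.
move=> gxs_inj n.
suff vanish k : (k <= n)%N ->
  exists2 u, vanish_before xs k u & iota u (xs n) != 0 by exact: vanish.
elim: k => [_|k IH kn]; first by have [u] := one_indep (xs n); exists u.
have [u u0 uxn] := IH (ltnW kn).
(* [K - g (xs k)] kills the value at [xs k] and multiplies the value at
   [xs n] by [g (xs n) - g (xs k) != 0]. *)
exists (K u - g (xs k) *: u).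
  move=> j; rewrite ltnS leq_eqVlt => /orP[/eqP ->|jk].
    by rewrite iotaB iotaZ Kg subrr.
  by rewrite iotaB iotaZ Kg u0 // !mulr0 subrr.
rewrite iotaB iotaZ Kg -mulrBl mulf_neq0 // subr_eq0.
by apply: contraTneq kn => /gxs_inj ->; rewrite ltnn.
Qed.

Hypothesis eval_cont : forall x, continuous (fun v => iota v x).

Lemma almost_norming_vanish_before (xs : nat -> X) : injective (g \o xs) ->
  forall n, exists v s, [/\ vanish_before xs n v, `|v| <= 1, 0 < s,
    s < 2 * `|iota v (xs n)| &
    forall u, vanish_before xs n u -> `|iota u (xs n)| <= s * `|u|].
Proof.
move=> gxs_inj n.
have [C evalC] : exists C, forall u, `|u| <= 1 -> `|iota u (xs n)| <= C.
  have eval0 : {for 0, continuous (cfun_eval (xs n))} := @eval_cont (xs n) 0.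
  by have /bounded_funP := continuous_linear_bounded 0 eval0; apply.
have [u u0 uxn] := exists_vanish_before gxs_inj n.
apply: (@almost_norming_vector _ _ _ (fun u => iota u (xs n)) C) => //.
- by move=> a w w0 j jn; rewrite iotaZ w0 ?mulr0.
- by move=> a w; rewrite iotaZ.
- by exists u.
Qed.

Hypothesis K_compact : compact_op K.

Lemma compact_multiplication_values_not_injective (xs : nat -> X) (eps : R[i]) :
  0 < eps -> (forall n, eps <= `|g (xs n)|) -> ~ injective (g \o xs).
Proof.
move=> eps0 geps gxs_inj.
have near_norming := almost_norming_vanish_before gxs_inj.
have [v v_norming] := choice near_norming.
have [s s_norm] := choice v_norming.
apply: (@precompact_no_separated_seq _ _ _ (K \o v) (eps / 2) K_compact).
- by rewrite divr_gt0.
- by move=> n; exists (v n) => //; have [] := s_norm n.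
move=> n m nm; have [vn0 _ s0 s_vn s_bound] := s_norm n.
have [vm0 _ _ _ _] := s_norm m.
have w0 : vanish_before xs n (K (v n) - K (v m)).
  move=> j jn; rewrite iotaB !Kg vn0 // vm0 ?(ltn_trans jn nm) //.
  by rewrite !mulr0 subrr.
have wxn : iota (K (v n) - K (v m)) (xs n) = g (xs n) * iota (v n) (xs n).
  by rewrite iotaB !Kg (vm0 n nm) mulr0 subr0.
have vxn0 : 0 < `|iota (v n) (xs n)|.
  by have := lt_trans s0 s_vn; rewrite pmulr_rgt0.
(* With w := K v_n - K v_m:
   eps |v_n(x_n)| <= |w(x_n)| <= s_n |w| <= 2 |v_n(x_n)| |w|. *)
rewrite ler_pdivrMr // -(ler_pM2r vxn0) /=.
apply: (@le_trans _ _ (s n * `|K (v n) - K (v m)|)).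
  by apply: le_trans (s_bound _ w0); rewrite wxn normrM ler_wpM2r.
by rewrite -mulrA (mulrC (s n)) ler_wpM2l // ltW.
Qed.

Lemma compact_multiplication_constant : connected [set: X] ->
  exists c, forall x, g x = c.
Proof.
move=> X_conn.
have [[a [b gab]]|g_const] := pselect (exists a b, g a != g b); last first.
  have [[x0 _]|X0] := pselect (exists x : X, True); last first.
    by exists 0 => x; case: X0; exists x.
  exists (g x0) => x; apply/eqP; apply: contraT => gx.
  by exfalso; apply: g_const; exists x, x0.
have [c [c1 Re_ab]] := exists_unit_Re_neq gab.
pose r x := complex.Re (g x * c) : R^o.
have r_cont : continuous r.
  move=> x; apply: (@continuous_comp _ _ _ (fun y => g y * c)).
    by apply: cvgM; [exact: multiplication_symbol_continuous | exact: cvg_cst].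
  exact: Re_continuous.
have r_itv : is_interval (range r).
  apply/connected_intervalP.
  exact: connected_continuous_connected X_conn (continuous_subspaceT r_cont).
have [t [eps [eps0 t_inj t_r t_eps]]] :=
  interval_injective_seq_away0 r_itv (imageT r a) (imageT r b) Re_ab.
have r_t n : exists x, r x = t n by have [x _ rx] := t_r n; exists x.
have [xs rxs] := choice r_t.
exfalso; apply: (@compact_multiplication_values_not_injective xs eps%:C).
- by rewrite ltcR.
- move=> n; rewrite -[`|g (xs n)|]mulr1 -c1 -normrM.
  by apply: le_trans (normc_ge_Re _); rewrite lecR -/(r (xs n)) rxs.
move=> j n /(congr1 (fun z => complex.Re (z * c))).
by rewrite -/(r _) -/(r _) !rxs => /t_inj.
Qed.

End MultiplicationOperator.

Theorem lemma4p3 (R : realType) (X : topologicalType)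
    (V : completeNormedModType R[i]) (iota : V -> X -> R[i]) :
  connected [set: X] ->
  hausdorff_space X ->
  banach_cfun iota ->
  ~ finite_dimensional V ->
  one_independent iota ->
  (forall T : {linear V -> V}, bounded_op T ->
     exists (lambda : R[i]) (K : {linear V -> V}),
       compact_op K /\ forall v : V, T v = lambda *: v + K v) ->
  forall omega : X -> R[i], multiplier iota omega ->
  exists c : R[i], forall x : X, omega x = c.
Proof.
move=> X_conn _ [iota_inj iota_lin iota_cont iota_co] _ one_indep op_decomp.
move=> omega omega_mult.
have [T [T_bounded T_mult]] := multiplier_operator iota_lin iota_inj omega_mult.
have [lam [K [K_compact T_K]]] := op_decomp T T_bounded.
have K_mult v x : iota (K v) x = (omega x - lam) * iota v x.
  by rewrite mulrBl -T_mult -(iotaZ iota_lin) -(iotaB iota_lin) T_K addrC addKr.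
have [c gc] := compact_multiplication_constant iota_lin K_mult iota_cont
  one_indep (compact_open_eval_continuous iota_co) K_compact X_conn.
by exists (c + lam) => x; rewrite -(gc x) subrK.
Qed.
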